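(* Let $A$ be a finite alphabet. If the sliding block code $\phi: A^{\mathbb{N}} \to A^{\mathbb{N}}$ is a local homeomorphism that $*$-commutes with the shift map $\sigma$, then $\phi$ is surjective and there exists $k \in \mathbb{N}$ such that $\phi$ is $k$-to-$1$ (every point of $A^{\mathbb{N}}$ has exactly $k$ preimages under $\phi$).
   Context: $A$ is a finite set with the discrete topology; $\mathbb{N}=\{1,2,3,\dots\}$; $A^{\mathbb{N}}$ is the space of one-sided infinite sequences over $A$ with the product topology; $\sigma(x_1x_2x_3\cdots)=x_2x_3\cdots$. A sliding block code is a map $\tau_d: A^{\mathbb{N}}\to A^{\mathbb{N}}$, $\tau_d(x)_i=d(x_i\cdots x_{i+n-1})$, for some $n\in\mathbb{N}$ and function $d:A^n\to A$. A continuous map $f:X\to Y$ is a local homeomorphism if every $x\in X$ has an open neighborhood $U$ such that $f(U)$ is open in $Y$ and $f:U\to f(U)$ is a homeomorphism. Two functions $S,T: X\to X$ $*$-commute if $ST=TS$ and for every $(y,z)$ with $S(y)=T(z)$ there exists a unique $x$ with $T(x)=y$ and $S(x)=z$. *)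

From HB Require Import structures.
From mathcomp Require Import all_boot all_order all_algebra.
From mathcomp Require Import all_classical all_reals all_analysis.

Set Implicit Arguments.
Unset Strict Implicit.
Unset Printing Implicit Defensive.

Local Open Scope classical_set_scope.

(* The one-sided full shift A^N: sequences indexed by nat (index 0 plays the
   role of the paper's index 1), with the product topology of the discrete
   topology on the finite alphabet A. *)
Definition fullshift (A : finType) : Type :=
  {ptws nat -> discrete_topology A}.

Definition shift_map {A : finType} (x : fullshift A) : fullshift A :=
  fun i => x i.+1.

Definition sliding_block_map {A : finType} (n : nat) (d : n.-tuple A -> A)
  (x : fullshift A) : fullshift A :=
  fun i => d [tuple x (i + j) | j < n].

Definition is_sliding_block_code {A : finType} (phi : fullshift A -> fullshift A) :=
  exists n (d : n.-tuple A -> A), (0 < n)%N /\ phi = sliding_block_map d.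

(* local homeomorphism: f continuous, and every x has an open neighbourhood U
   with f(U) open and f : U -> f(U) a homeomorphism (a bijection U -> f(U),
   continuous since f is, whose inverse g is continuous on f(U)). *)
Definition local_homeomorphism {X Y : topologicalType} (f : X -> Y) :=
  continuous f /\
  forall x : X, exists U : set X,
    [/\ open U, U x, open (f @` U), set_inj U f &
        exists g : Y -> X,
          (forall y, (f @` U) y -> U (g y) /\ f (g y) = y) /\
          {within f @` U, continuous g}].

Definition star_commute {X : Type} (S T : X -> X) :=
  (forall x, S (T x) = T (S x)) /\
  (forall y z, S y = T z -> exists! x, T x = y /\ S x = z).

From HB Require Import structures.
From mathcomp Require Import all_boot all_order all_algebra.
From mathcomp Require Import all_classical all_reals all_analysis.
Local Open Scope classical_set_scope.
Local Open Scope card_scope.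

(* The *-commutation says that [shift] maps the fibre of [phi] over [z]
   bijectively onto the fibre over [shift z]; it also lets one build preimages
   of arbitrarily long prefixes, so by compactness [phi] is onto.  A local
   homeomorphism of the compact space A^N is uniformly injective, so fibres are
   finite, and its local inverses lift the whole fibre over [z] injectively to
   the fibre over any point sharing a long enough prefix with [z].  Taking that
   point to be such a prefix followed by [y], whose iterated shift is [y],
   shows that any fibre is no larger than any other: all fibres have the same
   finite size, which is positive since [phi] is onto. *)

Lemma inj_sub_card_le T U (X : set T) (Y : set U) (f : T -> U) :
  {in X &, injective f} -> f @` X `<=` Y -> X #<= Y.
Proof.
move=> finj fXY; apply: (@card_le_trans _ _ _ (f @` X)); last exact: subset_card_le.
by have /card_eqPle[] := inj_card_eq finj.
Qed.

Section Fullshift.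
Context {A : finType}.

Definition cylinder (M : nat) (x : fullshift A) : set (fullshift A) :=
  [set y | forall i, (i < M)%N -> y i = x i].

Lemma fullshift_compact : compact [set: fullshift A].
Proof.
have finA : finite_set [set: discrete_topology A] := @finite_finset A setT.
have := @tychonoff nat (fun _ => discrete_topology A) (fun _ => setT)
  (fun _ => finite_compact finA).
by congr compact; apply/seteqP; split.
Qed.

Lemma cylinder_nbhs M (x : fullshift A) : nbhs x (cylinder M x).
Proof.
elim: M => [|M IH].
  by rewrite (_ : cylinder 0 x = setT); [exact: filterT|apply/seteqP].
have coordM : nbhs x [set y : fullshift A | y M = x M].
  have [+ _] := @pointwise_cvgP _ _ (nbhs x) x _.
  move=> /(_ (@cvg_id _ (nbhs x)) M) xM.
  exact: (xM _ (discrete_set1 (x M : discrete_topology A))).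
apply: filterS (filterI IH coordM) => y [yx yxM] i.
by rewrite ltnS leq_eqVlt => /orP[/eqP -> //|/yx].
Qed.

Lemma nbhs_cylinder (x : fullshift A) (U : set (fullshift A)) :
  nbhs x U -> exists M, cylinder M x `<=` U.
Proof.
pose C := filter_from [set: nat] (fun M => cylinder M x).
have FC : Filter C.
  apply: filter_from_filter; first by exists 0%N.
  move=> M1 M2 _ _; exists (maxn M1 M2) => // y yx.
  by split=> i iM; apply: yx; rewrite leq_max iM ?orbT.
have Cx : C --> x.
  apply/(pointwise_cvgP x) => i; apply/discrete_cvg.
  by exists i.+1 => // y; apply.
by move=> /Cx[M _ Mx]; exists M.
Qed.

Lemma fullshift_seq_cluster (u : nat -> fullshift A) :
  exists x, forall M m0, exists2 m, (m0 <= m)%N & cylinder M x (u m).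
Proof.
have [x [_ clx]] := @fullshift_compact (u @ \oo) _ filterT.
exists x => M m0.
have tail : (u @ \oo) (u @` [set m | (m0 <= m)%N]).
  by exists m0 => // m m0m; exists m.
by have [_ [[m m0m <-] xm]] := clx _ _ tail (cylinder_nbhs M x); exists m.
Qed.

Lemma continuous_cylinder {f : fullshift A -> fullshift A} :
  continuous f -> forall x N, exists M, f @` cylinder M x `<=` cylinder N (f x).
Proof.
move=> fc x N; have /nbhs_cylinder[M MN] := fc x _ (cylinder_nbhs N (f x)).
by exists M => _ [y /MN yN <-].
Qed.

Definition fibre (phi : fullshift A -> fullshift A) (z : fullshift A) :=
  phi @^-1` [set z].

Lemma iter_shift_map p (w : fullshift A) i :
  iter p shift_map w i = w (i + p)%N.
Proof. by elim: p i => [|p IH] i; rewrite ?addn0 // iterS /shift_map IH addSnnS. Qed.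

Section StarCommutingWithShift.
Variable phi : fullshift A -> fullshift A.
Hypothesis phi_star : star_commute phi shift_map.

Lemma star_shift_prefix_preimage N (z : fullshift A) : exists x, cylinder N z (phi x).
Proof.
have [phiS uniq_lift] := phi_star.
elim: N z => [|N IH] z; first by exists z.
have [y yz] := IH (shift_map z).
pose z' : fullshift A := fun i => if i is j.+1 then phi y j else z 0%N.
have [x [[_ xz'] _]] := uniq_lift y z' erefl.
by exists x => -[|i] iN; rewrite xz' //= yz.
Qed.

Lemma star_shift_surjective : continuous phi -> forall z, exists x, phi x = z.
Proof.
move=> phi_cont z; have [u uz] := choice (fun N => star_shift_prefix_preimage N z).
have [x xu] := fullshift_seq_cluster u.
exists x; apply: funext => i.
have [M Mi] := continuous_cylinder phi_cont x i.+1.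
have [m im um] := xu M i.+1.
rewrite -(uz m) // (Mi (phi (u m))) //; exact: imageP.
Qed.

Lemma fibre_card_shift z : fibre phi z #= fibre phi (shift_map z).
Proof.
have [phiS uniq_lift] := phi_star.
have -> : fibre phi (shift_map z) = shift_map @` fibre phi z.
  apply/seteqP; split=> [y /= yz|_ [x /= xz <-]]; last by rewrite /fibre /= phiS xz.
  by have [x [[<- xz] _]] := uniq_lift y z yz; exists x.
rewrite card_eq_sym; apply: inj_card_eq => x x' /set_mem xz /set_mem x'z xx'.
have [w [_ wuniq]] := uniq_lift (shift_map x) z (etrans (phiS x) (congr1 _ xz)).
by rewrite -(wuniq x) // (wuniq x') // -xx'.
Qed.

Lemma fibre_card_iter_shift p z : fibre phi z #= fibre phi (iter p shift_map z).
Proof.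
elim: p => [|p IH]; first exact: card_eqxx.
exact: card_eq_trans IH (fibre_card_shift _).
Qed.

End StarCommutingWithShift.

Section LocalHomeomorphism.
Variable phi : fullshift A -> fullshift A.
Hypothesis phi_loc : local_homeomorphism phi.

Lemma local_homeo_uniformly_injective :
  exists m, forall x x', phi x = phi x' -> cylinder m x x' -> x = x'.
Proof.
apply: contrapT => noninj.
have bad m : exists p : fullshift A * fullshift A,
    [/\ phi p.1 = phi p.2, cylinder m p.1 p.2 & p.1 <> p.2].
  apply: contrapT => nobad; apply: noninj; exists m => x x' xx' mx.
  by apply: contrapT => neq; apply: nobad; exists (x, x'); split.
have [p pbad] := choice bad.
have [x xp] := fullshift_seq_cluster (fun m => (p m).1).
have [_ /(_ x)[U [oU Ux _ Uinj _]]] := phi_loc.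
have /nbhs_cylinder[M MU] : nbhs x U by exact: open_nbhs_nbhs.
have [m Mm xpm] := xp M M.
have [pm mp neq] := pbad m.
have Up1 : (p m).1 \in U by rewrite inE; exact: MU.
have Up2 : (p m).2 \in U.
  by rewrite inE; apply: MU => i iM; rewrite mp ?xpm //; exact: leq_trans iM Mm.
exact: neq (Uinj _ _ Up1 Up2 pm).
Qed.

Lemma local_homeo_lift m x :
  exists p, forall z, cylinder p (phi x) z -> exists2 x', phi x' = z & cylinder m x x'.
Proof.
have [_ /(_ x)[U [oU Ux oV Uinj [g [gV gc]]]]] := phi_loc.
have Vx : (phi @` U) (phi x) by exists x.
have gx : g (phi x) = x.
  by have [Ug /Uinj] := gV _ Vx; apply; rewrite inE.
have gcx : {for phi x, continuous g}.
  by move: gc; rewrite continuous_open_subspace // => /(_ (phi x)); apply; rewrite inE.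
have xUm : nbhs x (U `&` cylinder m x).
  by apply: filterI; [exact: open_nbhs_nbhs|exact: cylinder_nbhs].
have /nbhs_cylinder[p pV] : nbhs (phi x) (g @^-1` (U `&` cylinder m x) `&` phi @` U).
  by apply: filterI; [apply: gcx; rewrite gx|exact: open_nbhs_nbhs].
by exists p => z /pV[[_ zm] /gV[_ gz]]; exists (g z).
Qed.

Lemma fibre_finite z : finite_set (fibre phi z).
Proof.
have [m minj] := local_homeo_uniformly_injective.
apply: (@card_le_finite _ _ _ [set: m.-tuple A]); last exact: finite_finset.
apply: (@inj_sub_card_le _ _ _ _ (fun x : fullshift A => [tuple x i | i < m])) => //.
move=> x x' /set_mem /= xz /set_mem /= x'z xx'; apply: minj; first by rewrite xz x'z.
by move=> i im; have := congr1 (fun t => tnth t (Ordinal im)) xx'; rewrite !tnth_mktuple.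
Qed.

Hypothesis phi_star : star_commute phi shift_map.

Lemma fibre_card_le z y : fibre phi z #<= fibre phi y.
Proof.
have [m minj] := local_homeo_uniformly_injective.
have [radius lift] := choice (local_homeo_lift m).
have /finite_seqP[s fibre_s] := fibre_finite z.
pose p := \max_(x <- s) radius x.
pose w : fullshift A := fun i => if (i < p)%N then z i else y (i - p)%N.
have wy : iter p shift_map w = y.
  by apply: funext => i; rewrite iter_shift_map /w ltnNge leq_addl addnK.
have liftw x : exists x', fibre phi z x -> phi x' = w /\ cylinder m x x'.
  have [xz|] := pselect (fibre phi z x); last by exists x.
  have [|x' x'w mx'] := lift x w; last by exists x'.
  move=> i ip; rewrite /w xz ifT //; apply: leq_trans ip _.
  by apply: leq_bigmax_seq => //; move: xz; rewrite fibre_s.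
have [g gw] := choice liftw.
rewrite -wy -(card_le_eqr (fibre_card_iter_shift _ phi_star p w)).
apply: (@inj_sub_card_le _ _ _ _ g) => [x x' /set_mem xz /set_mem x'z gxx'|_ [x xz <-]].
  have [_ mx] := gw x xz; have [_ mx'] := gw x' x'z.
  by apply: minj => [|i im]; [rewrite xz x'z|rewrite -mx // gxx' mx'].
by have [] := gw x xz.
Qed.

End LocalHomeomorphism.
End Fullshift.

Theorem proposition5p8 (A : finType) (phi : fullshift A -> fullshift A) :
  is_sliding_block_code phi ->
  local_homeomorphism phi ->
  star_commute phi shift_map ->
  (forall y : fullshift A, exists x, phi x = y) /\
  exists k : nat, (0 < k)%N /\
    forall y : fullshift A, (phi @^-1` [set y]) #= `I_k.
Proof.
move=> _ phi_loc phi_star.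
have phi_surj := star_shift_surjective phi phi_star phi_loc.1.
split=> //.
have [[z0 _]|nopoint] := pselect (exists z : fullshift A, True); last first.
  by exists 1%N; split=> // y; case: nopoint; exists y.
have /finite_setP[k z0k] := fibre_finite phi phi_loc z0.
exists k; split=> [|y].
  rewrite lt0n; apply/eqP => k0; move: z0k; rewrite k0 II0 card_eq0 => /eqP fibre0.
  by have [x xz0] := phi_surj z0; have : fibre phi z0 x by []; rewrite fibre0.
apply: card_eq_trans z0k.
by apply: Cantor_Bernstein; apply: fibre_card_le.
Qed.
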